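(* Let $*$ be an order-preserving left action of a monoid $T$ on a poset $X$, and let $Y\subseteq X$ be an order ideal of $X$ which is a meet semilattice under the induced order. Let $\cdot$ be the induced left partial action of $T$ on $Y$ ($t\cdot y$ is defined iff $t*y\in Y$, and then $t\cdot y=t*y$), and assume it satisfies axioms (A), (B), (C); let $\circ$ be its reverse right partial action. Assume moreover that for all $t\in T$, $x\in X$, $y\in Y$: if $x\le t*y$ then $x=t*z$ for some $z\le y$. Then for any $x,y\in Y$ and $s\in T$ such that $x\circ s$ is defined, the meet $x\wedge s*y$ exists in $X$ and $x\wedge s*y=s\cdot((x\circ s)\wedge y)$.
   Context: A left partial action of $T$ on $Y$: $1\cdot y=y$ always defined; if $t\cdot y$ and $s\cdot(t\cdot y)$ are defined then $(st)\cdot y$ is defined and equals it. With $\varphi_t\colon y\mapsto t\cdot y$: (A) $\mathrm{dom}\varphi_t$ and $\mathrm{ran}\varphi_t$ are order ideals of $Y$; (B) $\varphi_t$ is an order-isomorphism from $\mathrm{dom}\varphi_t$ onto $\mathrm{ran}\varphi_t$; (C) $\mathrm{dom}\varphi_t\ne\varnothing$. The reverse right partial action: $y\circ t$ is defined iff $y\in\mathrm{ran}\varphi_t$, and then $y\circ t=\varphi_t^{-1}(y)$. *)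

From HB Require Import structures.
From mathcomp Require Import all_boot all_order.
Set Implicit Arguments. Unset Strict Implicit. Unset Printing Implicit Defensive.
Import Order.TTheory.
Local Open Scope order_scope.

Section Defs.
Context {d : Order.disp_t} {X : porderType d}.

Definition is_meet_in (P : X -> Prop) (a b m : X) : Prop :=
  P m /\ m <= a /\ m <= b /\ (forall c, P c -> c <= a -> c <= b -> c <= m).

Definition is_meet (a b m : X) : Prop := is_meet_in (fun _ => True) a b m.

Definition order_ideal_in (Q P : X -> Prop) : Prop :=
  (forall a, P a -> Q a) /\ (forall a b, Q a -> a <= b -> P b -> P a).

Definition order_ideal (P : X -> Prop) : Prop := order_ideal_in (fun _ => True) P.

Definition meet_semilattice_in (Y : X -> Prop) : Prop :=
  forall a b, Y a -> Y b -> exists m, is_meet_in Y a b m.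

Context {T : Type}.
Variable act : T -> X -> X.
Variable Y : X -> Prop.

(* induced partial action on Y: t . y defined iff y in Y and t * y in Y *)
Definition pdom (t : T) : X -> Prop := fun y => Y y /\ Y (act t y).
Definition pran (t : T) : X -> Prop := fun x => exists y, pdom t y /\ act t y = x.

Definition axiomA : Prop :=
  forall t, order_ideal_in Y (pdom t) /\ order_ideal_in Y (pran t).
Definition axiomB : Prop :=
  forall t, forall a b, pdom t a -> pdom t b -> (act t a <= act t b <-> a <= b).
Definition axiomC : Prop := forall t, exists y, pdom t y.

(* reverse right partial action: x o t defined iff x in pran t, and
   then x o t is the (unique, by (B)) z in pdom t with t * z = x *)
Definition rev_act (x : X) (t : T) (z : X) : Prop := pdom t z /\ act t z = x.
End Defs.

From mathcomp Require Import all_boot all_order.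
Import Order.TTheory.
Local Open Scope order_scope.
Set Implicit Arguments. Unset Strict Implicit.

(* A common lower bound c of s * y and x = s * (x o s) is, by the lifting
   hypothesis, of the form s * u with u <= y; axiom (B) reflects c <= x into
   u <= x o s, so u lies below the meet (x o s) /\ y in Y, and monotonicity of
   the action brings c below s * ((x o s) /\ y). *)

Section InducedPartialAction.
Context {d : Order.disp_t} {X : porderType d} {T : Type}.
Variables (act : T -> X -> X) (Y : X -> Prop).
Hypothesis act_mono : forall t, {homo act t : a b / a <= b}.
Hypothesis Yideal : order_ideal Y.
Hypothesis hA : axiomA act Y.
Hypothesis hB : axiomB act Y.
Hypothesis hlift : forall t (a b : X), Y b -> a <= act t b ->
  exists c, c <= b /\ a = act t c.

Lemma ideal_le (a b : X) : a <= b -> Y b -> Y a.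
Proof. by have [_ Yid] := Yideal; exact: Yid. Qed.

Lemma pdom_le t (a b : X) : Y a -> a <= b -> pdom act Y t b -> pdom act Y t a.
Proof. by have [[_ pdid] _] := hA t; exact: pdid. Qed.

Lemma act_common_lower_bound t (y z c : X) : Y y -> pdom act Y t z ->
  c <= act t y -> c <= act t z ->
  exists u, [/\ c = act t u, Y u, u <= y & u <= z].
Proof.
move=> Yy [Yz Ytz] cty ctz.
have [u [uy Ec]] := hlift Yy cty.
have Yu : Y u := ideal_le uy Yy.
have ptu : pdom act Y t u by split=> //; rewrite -Ec; apply: ideal_le ctz Ytz.
by exists u; split=> //; apply/(hB ptu); [split | rewrite -Ec].
Qed.

Lemma is_meet_act t (y z w : X) : Y y -> pdom act Y t z ->
  is_meet_in Y z y w -> is_meet (act t z) (act t y) (act t w).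
Proof.
move=> Yy ptz [Yw [wz [wy wmax]]].
do 3?split; try exact: act_mono.
move=> c _ ctz cty.
have [u [-> Yu uy uz]] := act_common_lower_bound Yy ptz cty ctz.
exact/act_mono/wmax.
Qed.

End InducedPartialAction.

Theorem lemma3p8
  (T : Type) (mul : T -> T -> T) (one : T)
  (mulA : forall a b c, mul a (mul b c) = mul (mul a b) c)
  (mul1t : forall a, mul one a = a) (mult1 : forall a, mul a one = a)
  (d : Order.disp_t) (X : porderType d) (act : T -> X -> X)
  (act1 : forall x, act one x = x)
  (actM : forall s t x, act (mul s t) x = act s (act t x))
  (act_mono : forall t x y, x <= y -> act t x <= act t y)
  (Y : X -> Prop) (Yideal : order_ideal Y) (Ysemi : meet_semilattice_in Y)
  (hA : axiomA act Y) (hB : axiomB act Y) (hC : axiomC act Y)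
  (hlift : forall t (x y : X), Y y -> x <= act t y ->
             exists z, z <= y /\ x = act t z) :
  forall (x y : X) (s : T), Y x -> Y y ->
  forall z, rev_act act Y x s z ->
  forall w, is_meet_in Y z y w ->
    pdom act Y s w /\ is_meet x (act s y) (act s w).
Proof.
move=> x y s _ Yy z [psz <-] w zyw.
have [Yw [wz _]] := zyw.
split; first exact: (pdom_le hA Yw wz psz).
exact: (is_meet_act act_mono Yideal hB hlift Yy psz zyw).
Qed.
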